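(* Let $M\in\{0,1\}^{m\times n}$ with $m,n$ even. Then there exist $X_0\subset[m]$ and $Y_0\subset[n]$ with $|X_0|=m/2$ and $|Y_0|=n/2$ such that $$\operatorname{disc}(X_0,Y_0)\leq -\operatorname{disc}^{-}(M)/12.$$
   Context: For $M\in\{0,1\}^{m\times n}$, $|M|$ is the number of $1$ entries, $p=|M|/(mn)$, and for $X\subset[m]$, $Y\subset[n]$, $\operatorname{disc}(X,Y)=|M[X\times Y]|-p|X||Y|$, where $|M[X\times Y]|$ is the number of $1$ entries of the submatrix with rows $X$ and columns $Y$. The negative discrepancy is $\operatorname{disc}^{-}(M)=\max_{X\subset[m],Y\subset[n]}(-\operatorname{disc}(X,Y))$. *)

From mathcomp Require Import all_boot all_order all_algebra.
Set Implicit Arguments. Unset Strict Implicit. Unset Printing Implicit Defensive.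
Import Order.TTheory GRing.Theory Num.Theory.
Local Open Scope ring_scope.

Definition ones (m n : nat) (M : 'M[bool]_(m, n)) (X : {set 'I_m}) (Y : {set 'I_n}) : nat :=
  #|[set ij : 'I_m * 'I_n | [&& ij.1 \in X, ij.2 \in Y & M ij.1 ij.2]]|.

Definition density (m n : nat) (M : 'M[bool]_(m, n)) : rat :=
  (ones M setT setT)%:R / (m * n)%:R.

Definition disc (m n : nat) (M : 'M[bool]_(m, n)) (X : {set 'I_m}) (Y : {set 'I_n}) : rat :=
  (ones M X Y)%:R - density M * #|X|%:R * #|Y|%:R.

Definition disc_neg (m n : nat) (M : 'M[bool]_(m, n)) : rat :=
  \big[Order.max/0]_(XY : {set 'I_m} * {set 'I_n}) (- disc M XY.1 XY.2).

From mathcomp Require Import all_boot all_order all_algebra.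
From mathcomp Require Import lra zify.
Set Implicit Arguments.
Unset Strict Implicit.
Unset Printing Implicit Defensive.

Import Order.TTheory GRing.Theory Num.Theory.
Local Open Scope ring_scope.

(* With a := M - p, disc(X, Y) is the sum of a over X x Y, and a sums to 0
   over the whole matrix.  By averaging, some t-subset of S carries at most a
   t/|S| fraction of the sum over S.  Hence some half of the rows carries at
   most half of any column block, and a row set X with nonpositive sum can be
   trimmed or padded to a half carrying at most ((sum over X) + c)/2,
   provided the total is at most c, where c >= 0.  Given disc(X, Y) = -D,
   either the full columns Y carry at least D/3 (so their complement carries
   at most -D/3, and two halvings give -D/12), or halving X with c = D/3 gives
   a half X1 with sum at most -D/3 on Y; then either the full rows of X1 carry
   at least D/6 (halve the columns of the complementary half of rows) or
   halving Y with c = D/6 gives -D/12. *)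

Section SubsetSums.
Variables (R : realFieldType) (T : finType) (g : T -> R).

Lemma sum_setT : \sum_(i in [set: T]) g i = \sum_i g i.
Proof. by apply: eq_bigl => i; rewrite in_setT. Qed.

Lemma sum_setC (S : {set T}) :
  \sum_(i in S) g i + \sum_(i in ~: S) g i = \sum_i g i.
Proof. by rewrite -sum_setT [RHS](big_setID S) setTI setTD. Qed.

Lemma exists_subset_sum_le_avg (S : {set T}) (t : nat) : (t <= #|S|)%N ->
  exists2 Z : {set T}, Z \subset S &
    #|Z| = t /\ #|S|%:R * \sum_(i in Z) g i <= t%:R * \sum_(i in S) g i.
Proof.
move Ek: (#|S| - t)%N => k; elim: k S Ek => [|k IH] S Ek le_tS.
  have cS : #|S| = t by lia.
  by exists S; rewrite ?cS.
have [-> | t_gt0] := posnP t.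
  by exists set0; rewrite ?sub0set ?cards0 ?big_set0 ?mulr0 ?mul0r.
(* A maximal element of S is at least the average over S, so removing it
   cannot increase the average. *)
have [b bS b_max] : exists2 b, b \in S & forall i, i \in S -> g i <= g b.
  have [a aS] : exists a, a \in S by apply/set0Pn; rewrite -card_gt0; lia.
  by case: (arg_maxP g aS) => b; exists b.
have cS : #|S| = #|S :\ b|.+1 by rewrite (cardsD1 b) bS.
have [Z ZSb [cZ le_Z]] := IH (S :\ b) ltac:(lia) ltac:(lia).
exists Z; first exact: subset_trans ZSb (subD1set S b).
split => //.
have le_avg : \sum_(i in S :\ b) g i <= #|S :\ b|%:R * g b.
  rewrite -sum1_card natr_sum mulr_suml; apply: ler_sum => i /setD1P[_ iS].
  by rewrite mul1r b_max.
have N_gt0 : (0 : R) < #|S :\ b|%:R by rewrite ltr0n; lia.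
have t_ge0 : (0 : R) <= t%:R by [].
rewrite (big_setD1 b bS) cS -addn1 natrD /=.
move: le_Z le_avg N_gt0 t_ge0; move: (#|S :\ b|%:R) (t%:R) => N u.
nra.
Qed.

Lemma exists_half_sum_le_half (h : nat) : #|T| = (h + h)%N ->
  exists Z : {set T}, #|Z| = h /\ \sum_(i in Z) g i <= (\sum_i g i) / 2.
Proof.
move=> cT.
have [|Z _ [cZ _]] := exists_subset_sum_le_avg (S := [set: T]) (t := h).
  by rewrite cardsT cT leq_addr.
have cZC : #|~: Z| = h by have := cardsC Z; lia.
have := sum_setC Z.
have [le_Z | lt_Z] := lerP (\sum_(i in Z) g i) ((\sum_i g i) / 2).
- by exists Z.
- by exists (~: Z); split => //; lra.
Qed.

Lemma exists_half_sum_le (h : nat) (S : {set T}) (c : R) :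
  #|T| = (h + h)%N -> \sum_(i in S) g i <= 0 -> 0 <= c -> \sum_i g i <= c ->
  exists Z : {set T}, #|Z| = h /\ \sum_(i in Z) g i <= (\sum_(i in S) g i + c) / 2.
Proof.
move=> cT S_le0 c_ge0 tot_le.
have cS_le : (#|S| <= h + h)%N by rewrite -cT max_card.
have [le_hS | lt_Sh] := leqP h #|S|.
  have [Z ZS [cZ le_Z]] := exists_subset_sum_le_avg le_hS.
  exists Z; split => //.
  have [S0 | S_gt0] := posnP #|S|.
    have Z0 : Z = set0 by apply/eqP; rewrite -subset0 -(cards0_eq S0).
    by rewrite Z0 (cards0_eq S0) !big_set0; lra.
  have N_gt0 : (0 : R) < #|S|%:R by rewrite ltr0n.
  have N_le : #|S|%:R <= 2 * h%:R :> R by rewrite -natrM ler_nat; lia.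
  move: le_Z N_gt0 N_le; move: (#|S|%:R) (h%:R) => N u.
  nra.
have cSC : #|~: S| = (h + h - #|S|)%N by have := cardsC S; lia.
have [W WSC [cW le_W]] :=
  exists_subset_sum_le_avg (S := ~: S) (t := h - #|S|) ltac:(lia).
have dSW : [disjoint S & W] by rewrite disjoint_sym disjoints_subset.
exists (S :|: W); split.
  by rewrite cardsU (disjoint_setI0 dSW) cards0; lia.
have -> : \sum_(i in S :|: W) g i = \sum_(i in S) g i + \sum_(i in W) g i.
  by rewrite -bigU //; apply: eq_bigl => i; rewrite inE.
have := sum_setC S.
have A_gt0 : (0 : R) < (h - #|S|)%:R by rewrite ltr0n; lia.
have A_le : 2 * (h - #|S|)%:R <= (h + h - #|S|)%:R :> R.
  by rewrite -natrM ler_nat; lia.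
move: le_W A_gt0 A_le; rewrite cSC.
move: ((h - #|S|)%:R) ((h + h - #|S|)%:R) => A B.
nra.
Qed.

End SubsetSums.

Definition blocksum (R : nmodType) (I J : finType) (a : I -> J -> R)
    (X : {set I}) (Y : {set J}) : R :=
  \sum_(i in X) \sum_(j in Y) a i j.

Lemma blocksum_tr (R : nmodType) (I J : finType) (a : I -> J -> R) X Y :
  blocksum a X Y = blocksum (fun j i => a i j) Y X.
Proof. exact: exchange_big. Qed.

Lemma blocksum0l (R : nmodType) (I J : finType) (a : I -> J -> R) Y :
  blocksum a set0 Y = 0.
Proof. exact: big_set0. Qed.

Section RowHalving.
Variables (R : realFieldType) (I J : finType) (a : I -> J -> R).

Lemma blocksum_setCl X Y :
  blocksum a X Y + blocksum a (~: X) Y = blocksum a setT Y.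
Proof. by rewrite /blocksum sum_setC sum_setT. Qed.

Lemma exists_half_rows_le_half hm Y : #|I| = (hm + hm)%N ->
  exists X0 : {set I}, #|X0| = hm /\ blocksum a X0 Y <= blocksum a setT Y / 2.
Proof. by rewrite /blocksum sum_setT; apply: exists_half_sum_le_half. Qed.

Lemma exists_half_rows_le hm X Y c : #|I| = (hm + hm)%N ->
  blocksum a X Y <= 0 -> 0 <= c -> blocksum a setT Y <= c ->
  exists X0 : {set I}, #|X0| = hm /\ blocksum a X0 Y <= (blocksum a X Y + c) / 2.
Proof. by rewrite /blocksum sum_setT; apply: exists_half_sum_le. Qed.

End RowHalving.

Section ColumnHalving.
Variables (R : realFieldType) (I J : finType) (a : I -> J -> R).

Lemma blocksum_setCr X Y :
  blocksum a X Y + blocksum a X (~: Y) = blocksum a X setT.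
Proof. by rewrite !(blocksum_tr a) blocksum_setCl. Qed.

Lemma exists_half_cols_le_half hn X : #|J| = (hn + hn)%N ->
  exists Y0 : {set J}, #|Y0| = hn /\ blocksum a X Y0 <= blocksum a X setT / 2.
Proof.
move=> cJ.
have [Y0 [cY0 le_Y0]] := exists_half_rows_le_half (fun j i => a i j) X cJ.
by exists Y0; rewrite !(blocksum_tr a).
Qed.

Lemma exists_half_cols_le hn X Y c : #|J| = (hn + hn)%N ->
  blocksum a X Y <= 0 -> 0 <= c -> blocksum a X setT <= c ->
  exists Y0 : {set J}, #|Y0| = hn /\ blocksum a X Y0 <= (blocksum a X Y + c) / 2.
Proof.
rewrite !(blocksum_tr a) => cJ le0 c_ge0 le_c.
have [Y0 [cY0 le_Y0]] := exists_half_rows_le cJ le0 c_ge0 le_c.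
by exists Y0; rewrite (blocksum_tr a).
Qed.

End ColumnHalving.

Lemma exists_halves_blocksum_le (R : realFieldType) (I J : finType)
    (a : I -> J -> R) hm hn X Y :
  #|I| = (hm + hm)%N -> #|J| = (hn + hn)%N -> blocksum a setT setT = 0 ->
  exists (X0 : {set I}) (Y0 : {set J}),
    [/\ #|X0| = hm, #|Y0| = hn & blocksum a X0 Y0 <= blocksum a X Y / 12].
Proof.
move=> cI cJ tot0.
wlog f_le0 : X Y / blocksum a X Y <= 0.
  move=> le0_case; have [|f_gt0] := lerP (blocksum a X Y) 0; first exact: le0_case.
  have [X0 [Y0 [cX0 cY0]]] := le0_case set0 Y ltac:(by rewrite blocksum0l).
  by rewrite blocksum0l => le0; exists X0, Y0; split => //; lra.
have [le_fc | lt_cf] := lerP (- blocksum a X Y / 3) (blocksum a setT Y).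
  have := blocksum_setCr a setT Y; rewrite tot0 => sumC.
  have [Y1 [cY1 le_Y1]] :=
    exists_half_cols_le (X := setT) (Y := ~: Y) (c := 0) cJ ltac:(lra) (lexx 0) ltac:(lra).
  have [X0 [cX0 le_X0]] := exists_half_rows_le_half a Y1 cI.
  by exists X0, Y1; split => //; lra.
have [X1 [cX1 le_X1]] := exists_half_rows_le (c := - blocksum a X Y / 3) cI f_le0
  ltac:(lra) ltac:(lra).
have [le_f1 | lt_f1] := lerP (- blocksum a X Y / 6) (blocksum a X1 setT).
  have := blocksum_setCl a X1 setT; rewrite tot0 => sumC.
  have cX1C : #|~: X1| = hm by have := cardsC X1; lia.
  have [Y0 [cY0 le_Y0]] := exists_half_cols_le_half a (~: X1) cJ.
  by exists (~: X1), Y0; split => //; lra.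
have [Y1 [cY1 le_Y1]] := exists_half_cols_le (X := X1) (Y := Y)
  (c := - blocksum a X Y / 6) cJ ltac:(lra) ltac:(lra) ltac:(lra).
by exists X1, Y1; split => //; lra.
Qed.

Section Discrepancy.
Variables (m n : nat) (M : 'M[bool]_(m, n)).

Definition centered (i : 'I_m) (j : 'I_n) : rat := (M i j)%:R - density M.

Lemma ones_blocksum X Y :
  (ones M X Y)%:R = blocksum (fun i j => (M i j)%:R : rat) X Y.
Proof.
rewrite /ones -sum1_card natr_sum /blocksum pair_big_dep /=.
rewrite big_mkcond [RHS]big_mkcond; apply: eq_bigr => -[i j] _; rewrite inE /=.
by case: (i \in X); case: (j \in Y); case: (M i j).
Qed.

Lemma disc_blocksum X Y : disc M X Y = blocksum centered X Y.
Proof.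
rewrite /disc ones_blocksum /blocksum /centered.
under [in RHS]eq_bigr do rewrite sumrB sumr_const.
by rewrite sumrB sumr_const -mulrnA -mulrA -natrM mulr_natr mulnC.
Qed.

Lemma disc_setT : disc M setT setT = 0.
Proof.
rewrite /disc /density !cardsT !card_ord -mulrA -natrM.
have [mn0 | mn_gt0] := posnP (m * n).
  have : (ones M setT setT <= m * n)%N.
    by rewrite /ones (leq_trans (max_card _)) // card_prod !card_ord.
  by rewrite mn0 leqn0 => /eqP ->; rewrite !mul0r subr0.
by rewrite mulfVK ?subrr // pnatr_eq0 -lt0n.
Qed.

End Discrepancy.

Lemma card_ord_even m : ~~ odd m -> #|'I_m| = (m./2 + m./2)%N.
Proof.
by move=> even_m; rewrite card_ord addnn -{1}(odd_double_half m) (negbTE even_m).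
Qed.

Theorem claim2p2 (m n : nat) (M : 'M[bool]_(m, n)) :
  ~~ odd m -> ~~ odd n ->
  exists (X0 : {set 'I_m}) (Y0 : {set 'I_n}),
    [/\ #|X0| = m./2, #|Y0| = n./2 & disc M X0 Y0 <= - disc_neg M / 12].
Proof.
move=> /card_ord_even cI /card_ord_even cJ.
have tot0 : blocksum (centered M) setT setT = 0 by rewrite -disc_blocksum disc_setT.
pose P d := exists (X0 : {set 'I_m}) (Y0 : {set 'I_n}),
  [/\ #|X0| = m./2, #|Y0| = n./2 & disc M X0 Y0 <= - d / 12].
have P_disc X Y : P (- disc M X Y).
  have [X0 [Y0 [cX0 cY0 le_XY]]] := exists_halves_blocksum_le X Y cI cJ tot0.
  by exists X0, Y0; rewrite opprK !disc_blocksum.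
rewrite /disc_neg; apply: (big_ind P) => [|d1 d2 P1 P2 | [X Y] _]; last exact: P_disc.
- by have := P_disc set0 setT; rewrite disc_blocksum blocksum0l oppr0.
- by rewrite /Order.max; case: ifP.
Qed.
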